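(* In the setting of the context, the linear forms $Q^{(l)}$ and $\bar Q^{(l)}$ satisfy, for $l\ge1$, $$Q^{(l)}=\xi_1^{(l)}-(g_{l,0},\dots,g_{l,l-1})(g^{[l]})^{-1}\xi_1^{[l]}=\bar S_{l,l}\,(0,\dots,0,1)(g^{[l+1]})^{-1}\xi_1^{[l+1]}=\frac{1}{\det g^{[l]}}\det\begin{pmatrix}g_{0,0}&\cdots&g_{0,l-1}&\xi_1^{(0)}\\ \vdots&&\vdots&\vdots\\ g_{l,0}&\cdots&g_{l,l-1}&\xi_1^{(l)}\end{pmatrix},$$ and, for $l\ge0$, $$\bar Q^{(l)}=(\bar S_{l,l})^{-1}\Big(\xi_2^{(l)}-(\xi_2^{[l]})^\top(g^{[l]})^{-1}\begin{pmatrix}g_{0,l}\\ \vdots\\ g_{l-1,l}\end{pmatrix}\Big)=(\xi_2^{[l+1]})^\top(g^{[l+1]})^{-1}\begin{pmatrix}0\\ \vdots\\0\\1\end{pmatrix}=\frac{1}{\det g^{[l+1]}}\det\begin{pmatrix}g_{0,0}&\cdots&g_{0,l}\\ \vdots&&\vdots\\ g_{l-1,0}&\cdots&g_{l-1,l}\\ \xi_2^{(0)}&\cdots&\xi_2^{(l)}\end{pmatrix}.$$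
   Context: $\mu$ is a finite Borel measure on an interval $\Delta\subset\mathbb R$ with infinitely many support points, not changing sign; $w_{1,a}$ ($a=1,\dots,p_1$), $w_{2,b}$ ($b=1,\dots,p_2$) are real integrable functions on $\Delta$ not changing sign; compositions $\vec n_\ell\in\mathbb N^{p_\ell}$ fixed. Each $i\in\mathbb Z_+$ is uniquely $i=q|\vec n_\ell|+n_{\ell,1}+\dots+n_{\ell,a-1}+r$, $0\le r<n_{\ell,a}$; $a_\ell(i)=a$, $k_\ell(i)=qn_{\ell,a}+r$. $\xi_\ell(x)$ is the semi-infinite vector with $i$-th entry $\xi_\ell^{(i)}=w_{\ell,a_\ell(i)}(x)x^{k_\ell(i)}$, and $\xi_\ell^{[l]}$ is the vector of its first $l$ entries. $g=\int\xi_1\xi_2^\top d\mu$, $g^{[l]}=(g_{i,j})_{0\le i,j<l}$. The combination is assumed perfect (for all $\vec\nu_1,\vec\nu_2$ with $|\vec\nu_1|=|\vec\nu_2|+1$, nontrivial polynomials $A_a$, $\deg A_a\le\nu_{1,a}-1$, with $\int\sum_aA_aw_{1,a}w_{2,b}x^jd\mu=0$ for $j<\nu_{2,b}$, all $b$, have $\deg A_a=\nu_{1,a}-1$), so that all $\det g^{[l]}\ne0$ and $g=S^{-1}\bar S$ with $S$ unit lower triangular and $\bar S$ upper triangular invertible. $Q=S\xi_1$, $\bar Q=(\bar S^{-1})^\top\xi_2$. *)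

From HB Require Import structures.
From mathcomp Require Import all_boot all_order all_algebra.
From mathcomp Require Import all_classical all_reals all_analysis.
Set Implicit Arguments. Unset Strict Implicit. Unset Printing Implicit Defensive.
Import Order.TTheory GRing.Theory Num.Theory.
Local Open Scope classical_set_scope.
Local Open Scope ring_scope.

(* locate ns r = (a, r') with a 0-based block index and 0 <= r' < ns_a,
   r = ns_0 + ... + ns_(a-1) + r'  (for r < sumn ns). *)
Fixpoint locate (ns : seq nat) (r : nat) : nat * nat :=
  match ns with
  | [::] => (0%N, r)
  | n :: ns' => if (r < n)%N then (0%N, r)
                else let p := locate ns' (r - n) in (p.1.+1, p.2)
  end.

(* a_l(i) - 1  (0-based) *)
Definition a_of (ns : seq nat) (i : nat) : nat := (locate ns (i %% sumn ns)).1.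
Definition k_of (ns : seq nat) (i : nat) : nat :=
  (i %/ sumn ns * nth 0%N ns (a_of ns i) + (locate ns (i %% sumn ns)).2)%N.

Definition composition (ns : seq nat) : bool := (ns != [::]) && all (fun n => 0 < n)%N ns.

Section Setting.
Variable R : realType.

(* xi^{(i)}(x) = w_{a(i)}(x) x^{k(i)}; weights indexed 0-based *)
Definition xi (ns : seq nat) (w : nat -> R -> R) (i : nat) (x : R) : R :=
  w (a_of ns i) x * x ^+ k_of ns i.

Definition xivec (ns : seq nat) (w : nat -> R -> R) (l : nat) (x : R) : 'cV[R]_l :=
  \col_(i < l) xi ns w i x.

Definition supp_pt (mu : {measure set R -> \bar R}) (x : R) : Prop :=
  forall e : R, 0 < e -> (0 < mu [set y : R | ((x - e < y) && (y < x + e))%R])%E.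

(* moment matrix, mu = sgn * nu with nu a nonnegative measure *)
Definition gmom (sgn : R) (nu : {measure set R -> \bar R}) (D : interval R)
  (ns1 ns2 : seq nat) (w1 w2 : nat -> R -> R) (i j : nat) : R :=
  sgn * Rintegral nu [set` D] (fun x => xi ns1 w1 i x * xi ns2 w2 j x).

Definition trunc (l : nat) (g : nat -> nat -> R) : 'M[R]_l := \matrix_(i < l, j < l) g i j.

Definition perfect (nu : {measure set R -> \bar R}) (D : interval R)
  (ns1 ns2 : seq nat) (w1 w2 : nat -> R -> R) : Prop :=
  forall (nu1 nu2 : seq nat), size nu1 = size ns1 -> size nu2 = size ns2 ->
  sumn nu1 = (sumn nu2).+1 ->
  forall A : nat -> {poly R},
    (forall a, (a < size ns1)%N -> (size (A a) <= nth 0 nu1 a)%N) ->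
    (exists2 a, (a < size ns1)%N & A a != 0) ->
    (forall b j, (b < size ns2)%N -> (j < nth 0 nu2 b)%N ->
       Rintegral nu [set` D]
         (fun x => (\sum_(a < size ns1) (A a).[x] * w1 a x) * w2 b x * x ^+ j) = 0) ->
    forall a, (a < size ns1)%N -> size (A a) = nth 0 nu1 a.

Definition Qform (S : nat -> nat -> R) (ns1 : seq nat) (w1 : nat -> R -> R)
  (l : nat) (x : R) : R :=
  \sum_(k < l.+1) S l k * xi ns1 w1 k x.

Definition Qbform (Sb : nat -> nat -> R) (ns2 : seq nat) (w2 : nat -> R -> R)
  (l : nat) (x : R) : R :=
  \sum_(k < l.+1) (invmx (trunc l.+1 Sb)) k ord_max * xi ns2 w2 k x.

End Setting.

(* Everything follows from the factorizations [S_n g_n = Sb_n] of the n x n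
   sections, which hold because [S] is lower and [Sb] upper triangular.
   Row [l] of [S] is [Sb_ll] times the last row of [g_(l+1)^-1], and column [l]
   of [Sb^-1] is the last column of [g_(l+1)^-1], since [S] fixes the last unit
   vector.  Cramer's rule turns these into the bordered determinants, and
   splitting off the last coordinate gives the Schur-complement forms.  The
   measure-theoretic hypotheses only serve to produce the factorization, which
   the statement already assumes. *)
From HB Require Import structures.
From mathcomp Require Import all_boot all_order all_algebra.
From mathcomp Require Import all_classical all_reals all_analysis.
From mathcomp Require Import ring.
Set Implicit Arguments. Unset Strict Implicit. Unset Printing Implicit Defensive.
Import Order.TTheory GRing.Theory Num.Theory.
Local Open Scope classical_set_scope.
Local Open Scope ring_scope.

Section MatrixVectorEntries.
Variable R : comNzRingType.

Lemma mulmx_row_col n (a b : 'I_n -> R) :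
  ((\row_k a k) *m \col_k b k) 0 0 = \sum_k a k * b k.
Proof. by rewrite !mxE; apply: eq_bigr => k _; rewrite !mxE. Qed.

Lemma delta_last_mulmx n (A : 'M[R]_n.+1) :
  (delta_mx 0 ord_max : 'rV_n.+1) *m A = row ord_max A.
Proof. by rewrite rowE; congr (delta_mx _ _ *m _); rewrite [LHS]ord1. Qed.

Lemma mulmx_delta_last n (A : 'M[R]_n.+1) :
  A *m (delta_mx ord_max 0 : 'cV_n.+1) = col ord_max A.
Proof. by rewrite colE; congr (_ *m delta_mx _ _); rewrite [LHS]ord1. Qed.

Definition border_col n (v : 'cV[R]_n) : 'cV[R]_n.+1 :=
  \col_k (if unlift ord_max k is Some k' then - v k' 0 else 1).

Lemma border_col_widen n (v : 'cV[R]_n) k :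
  border_col v (widen_ord (leqnSn n) k) 0 = - v k 0.
Proof.
have -> : widen_ord (leqnSn n) k = lift ord_max k.
  by apply: val_inj; rewrite /= /bump leqNgt ltn_ord.
by rewrite mxE liftK.
Qed.

Lemma border_col_last n (v : 'cV[R]_n) : border_col v ord_max 0 = 1.
Proof. by rewrite mxE unlift_none. Qed.

Lemma mulmx_border_col m n (A : 'M[R]_(m, n.+1)) (v : 'cV_n) i :
  (A *m border_col v) i 0
  = A i ord_max - \sum_(k < n) A i (widen_ord (leqnSn n) k) * v k 0.
Proof.
rewrite mxE big_ord_recr /= border_col_last mulr1 addrC -sumrN.
by congr (_ + _); apply: eq_bigr => k _; rewrite border_col_widen mulrN.
Qed.

End MatrixVectorEntries.

Section TruncatedLU.
Variable R : realType.
Variables S Sb g : nat -> nat -> R.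
Hypothesis S_diag : forall i, S i i = 1.
Hypothesis S_lower : forall i j, (i < j)%N -> S i j = 0.
Hypothesis Sb_diag_neq0 : forall i, Sb i i != 0.
Hypothesis Sb_upper : forall i j, (j < i)%N -> Sb i j = 0.
Hypothesis LU : forall i j, \sum_(k < i.+1) S i k * g k j = Sb i j.

Lemma sum_S_row_widen n i (f : nat -> R) : (i < n)%N ->
  \sum_(k < n) S i k * f k = \sum_(k < i.+1) S i k * f k.
Proof.
move=> lt_in; rewrite (big_ord_widen _ (fun k => S i k * f k) lt_in).
rewrite [RHS]big_mkcond /=; apply: eq_bigr => k _.
by case: ifP => // /negbT; rewrite -leqNgt => lt_ik; rewrite S_lower ?mul0r.
Qed.

Lemma trunc_LU n : trunc n S *m trunc n g = trunc n Sb.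
Proof.
apply/matrixP => i j; rewrite !mxE; under eq_bigr do rewrite !mxE.
by rewrite (sum_S_row_widen (fun k => g k j) (ltn_ord i)) LU.
Qed.

Lemma det_trunc_S n : \det (trunc n S) = 1.
Proof.
rewrite det_trig; last by apply/is_trig_mxP => i j lt_ij; rewrite mxE S_lower.
by apply: big1 => i _; rewrite mxE S_diag.
Qed.

Lemma det_trunc_g n : \det (trunc n g) = \prod_(i < n) Sb i i.
Proof.
have := congr1 determinant (trunc_LU n).
rewrite det_mulmx det_trunc_S mul1r => ->.
rewrite -det_tr det_trig; last first.
  by apply/is_trig_mxP => i j lt_ij; rewrite !mxE Sb_upper.
by apply: eq_bigr => i _; rewrite !mxE.
Qed.

Lemma det_trunc_g_neq0 n : \det (trunc n g) != 0.
Proof. by rewrite det_trunc_g; apply/prodf_neq0 => i _; apply: Sb_diag_neq0. Qed.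

Lemma det_trunc_gS l : \det (trunc l.+1 g) = \det (trunc l g) * Sb l l.
Proof. by rewrite !det_trunc_g big_ord_recr. Qed.

Lemma trunc_g_unit n : trunc n g \in unitmx.
Proof. by rewrite unitmxE unitfE det_trunc_g_neq0. Qed.

Lemma trunc_Sb_unit n : trunc n Sb \in unitmx.
Proof.
by rewrite -trunc_LU unitmx_mul unitmxE det_trunc_S unitr1 trunc_g_unit.
Qed.

Lemma row_g_S l : \row_(j < l) g l j = - ((\row_(j < l) S l j) *m trunc l g).
Proof.
apply/matrixP => i j; rewrite !mxE; under eq_bigr do rewrite !mxE.
have := LU l j; rewrite big_ord_recr /= S_diag mul1r Sb_upper //.
by move/eqP; rewrite addr_eq0 => /eqP ->; rewrite opprK.
Qed.

Lemma row_S_mul_g l :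
  (\row_(k < l.+1) S l k) *m trunc l.+1 g = Sb l l *: delta_mx 0 ord_max.
Proof.
apply/matrixP => i j; rewrite !mxE; under eq_bigr do rewrite !mxE.
rewrite (sum_S_row_widen (fun k => g k j) (ltnSn l)) LU ord1 eqxx /=.
have [->|ne_j] := eqVneq j ord_max; first by rewrite mulr1.
rewrite mulr0 Sb_upper // ltn_neqAle -ltnS ltn_ord andbT.
by apply: contra ne_j => /eqP eq_j; apply/eqP/val_inj.
Qed.

Lemma delta_last_mul_inv_g l :
  (delta_mx 0 ord_max : 'rV_l.+1) *m invmx (trunc l.+1 g)
  = (Sb l l)^-1 *: \row_(k < l.+1) S l k.
Proof.
rewrite -[\row_k _](mulmxK (trunc_g_unit l.+1)) row_S_mul_g -scalemxAl.
by rewrite scalerA mulVf ?Sb_diag_neq0 // scale1r.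
Qed.

Lemma trunc_S_col_last l :
  trunc l.+1 S *m (delta_mx ord_max 0 : 'cV_l.+1) = delta_mx ord_max 0.
Proof.
rewrite mulmx_delta_last; apply/matrixP => i j; rewrite !mxE ord1 eqxx andbT.
have [->|ne_i] := eqVneq i ord_max; first by rewrite S_diag.
rewrite S_lower //= ltn_neqAle -ltnS ltn_ord andbT.
by apply: contra ne_i => /eqP eq_i; apply/eqP/val_inj.
Qed.

Lemma inv_g_col_last l :
  invmx (trunc l.+1 g) *m (delta_mx ord_max 0 : 'cV_l.+1)
  = col ord_max (invmx (trunc l.+1 Sb)).
Proof.
have -> : invmx (trunc l.+1 g) = invmx (trunc l.+1 Sb) *m trunc l.+1 S.
  have -> : trunc l.+1 S = trunc l.+1 Sb *m invmx (trunc l.+1 g).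
    by rewrite -trunc_LU mulmxK ?trunc_g_unit.
  by rewrite mulKmx ?trunc_Sb_unit.
by rewrite -mulmxA trunc_S_col_last mulmx_delta_last.
Qed.

Variable l : nat.

Lemma trunc_g_mul_border_col :
  trunc l.+1 g *m border_col (invmx (trunc l g) *m \col_(i < l) g i l)
  = Sb l l *: delta_mx ord_max 0.
Proof.
set v := invmx (trunc l g) *m _.
have g_v : trunc l g *m v = \col_(i < l) g i l by rewrite mulKVmx ?trunc_g_unit.
clearbody v.
have sum_g_v : \sum_(k < l) g l k * v k 0 = - \sum_(k < l) S l k * g k l.
  transitivity (((\row_(j < l) g l j) *m v) 0 0).
    by rewrite mxE; apply: eq_bigr => k _; rewrite mxE.
  by rewrite row_g_S mulNmx -mulmxA g_v mxE mulmx_row_col.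
apply/matrixP => i j; rewrite [j]ord1 mulmx_border_col !mxE eqxx andbT.
have [i' ->|->] := unliftP ord_max i.
- rewrite [lift _ _ == _]eq_sym (negbTE (neq_lift _ _)) mulr0 lift_max.
  have := congr1 (fun A : 'cV_l => A i' 0) g_v; rewrite !mxE => <-.
  by apply/eqP; rewrite subr_eq0; apply/eqP/eq_bigr => k _; rewrite !mxE lift_max.
- rewrite eqxx mulr1 (eq_bigr (fun k : 'I_l => g l k * v k 0)) => [|k _]; last first.
    by rewrite mxE.
  by rewrite sum_g_v opprK -(LU l l) big_ord_recr /= S_diag mul1r addrC.
Qed.

Lemma inv_g_col_last_border :
  invmx (trunc l.+1 g) *m (delta_mx ord_max 0 : 'cV_l.+1)
  = (Sb l l)^-1 *: border_col (invmx (trunc l g) *m \col_(i < l) g i l).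
Proof.
rewrite -[border_col _](mulKmx (trunc_g_unit l.+1)) trunc_g_mul_border_col.
by rewrite -scalemxAr scalerA mulVf ?Sb_diag_neq0 // scale1r.
Qed.

Variable f : nat -> R.

Lemma sum_S_row_schur :
  \sum_(k < l.+1) S l k * f k =
  f l - ((\row_(j < l) g l j) *m invmx (trunc l g) *m \col_(i < l) f i) 0 0.
Proof.
rewrite row_g_S mulNmx mulmxK ?trunc_g_unit // mulNmx mxE opprK mulmx_row_col.
by rewrite big_ord_recr /= S_diag mul1r addrC.
Qed.

Lemma sum_S_row_inv_g :
  \sum_(k < l.+1) S l k * f k =
  Sb l l * ((delta_mx 0 ord_max : 'rV_l.+1) *m invmx (trunc l.+1 g)
            *m \col_(i < l.+1) f i) 0 0.
Proof.
rewrite delta_last_mul_inv_g -scalemxAl mxE mulrA mulfV ?Sb_diag_neq0 //.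
by rewrite mul1r mulmx_row_col.
Qed.

Lemma sum_S_row_det :
  \sum_(k < l.+1) S l k * f k =
  \det (\matrix_(i < l.+1, j < l.+1) if (j < l)%N then g i j else f i)
  / \det (trunc l g).
Proof.
rewrite sum_S_row_inv_g delta_last_mulmx /invmx trunc_g_unit.
set M := \matrix_(i, j) (if _ then _ else _); rewrite (expand_det_col M ord_max).
have cof_M i : cofactor M i ord_max = cofactor (trunc l.+1 g) i ord_max.
  rewrite /cofactor; congr (_ * \det _).
  by apply/matrixP => a b; rewrite !mxE lift_max ltn_ord.
under eq_bigr => i _ do rewrite cof_M {1}/M mxE ltnn.
rewrite !mxE mulr_sumr mulr_suml; apply: eq_bigr => i _.
rewrite !mxE det_trunc_gS.
by field; rewrite ?Sb_diag_neq0 ?det_trunc_g_neq0.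
Qed.

Lemma sum_invSb_col_inv_g :
  \sum_(k < l.+1) (invmx (trunc l.+1 Sb)) k ord_max * f k =
  ((\col_(i < l.+1) f i)^T *m invmx (trunc l.+1 g)
     *m (delta_mx ord_max 0 : 'cV_l.+1)) 0 0.
Proof.
rewrite -mulmxA inv_g_col_last !mxE.
by apply: eq_bigr => k _; rewrite !mxE mulrC.
Qed.

Lemma sum_invSb_col_det :
  \sum_(k < l.+1) (invmx (trunc l.+1 Sb)) k ord_max * f k =
  \det (\matrix_(i < l.+1, j < l.+1) if (i < l)%N then g i j else f j)
  / \det (trunc l.+1 g).
Proof.
rewrite sum_invSb_col_inv_g -mulmxA mulmx_delta_last /invmx trunc_g_unit.
set M := \matrix_(i, j) (if _ then _ else _); rewrite (expand_det_row M ord_max).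
have cof_M j : cofactor M ord_max j = cofactor (trunc l.+1 g) ord_max j.
  rewrite /cofactor; congr (_ * \det _).
  by apply/matrixP => a b; rewrite !mxE lift_max ltn_ord.
under [X in _ = X / _]eq_bigr => j _ do rewrite cof_M {1}/M mxE ltnn.
rewrite !mxE mulr_suml; apply: eq_bigr => j _.
by rewrite !mxE mulrCA mulrC.
Qed.

Lemma sum_invSb_col_schur :
  \sum_(k < l.+1) (invmx (trunc l.+1 Sb)) k ord_max * f k =
  (Sb l l)^-1 * (f l - ((\col_(i < l) f i)^T *m invmx (trunc l g)
                          *m (\col_(i < l) g i l)) 0 0).
Proof.
rewrite sum_invSb_col_inv_g -mulmxA inv_g_col_last_border -scalemxAr mxE.
congr (_ * _); rewrite mulmx_border_col -mulmxA !mxE; congr (_ - _).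
by apply: eq_bigr => k _; rewrite !mxE.
Qed.

End TruncatedLU.

Theorem proposition2p7 (R : realType)
  (nu : {measure set R -> \bar R}) (sgn : R) (D : interval R)
  (ns1 ns2 : seq nat) (w1 w2 : nat -> R -> R)
  (S Sb : nat -> nat -> R) :
  (* mu = sgn * nu, a finite Borel measure on D, not changing sign *)
  (sgn = 1 \/ sgn = -1) ->
  (nu [set` D] < +oo)%E -> nu (~` [set` D]) = 0%E ->
  infinite_set [set x | supp_pt nu x] ->
  (* compositions and weights *)
  composition ns1 -> composition ns2 ->
  (forall a, (a < size ns1)%N -> nu.-integrable [set` D] (EFin \o w1 a)) ->
  (forall b, (b < size ns2)%N -> nu.-integrable [set` D] (EFin \o w2 b)) ->
  (forall a, (a < size ns1)%N ->
     (forall x, x \in D -> 0 <= w1 a x) \/ (forall x, x \in D -> w1 a x <= 0)) ->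
  (forall b, (b < size ns2)%N ->
     (forall x, x \in D -> 0 <= w2 b x) \/ (forall x, x \in D -> w2 b x <= 0)) ->
  perfect nu D ns1 ns2 w1 w2 ->
  (* g = S^{-1} \bar S, S unit lower triangular, \bar S upper triangular invertible *)
  (forall i, S i i = 1) -> (forall i j, (i < j)%N -> S i j = 0) ->
  (forall i, Sb i i != 0) -> (forall i j, (j < i)%N -> Sb i j = 0) ->
  (forall i j, \sum_(k < i.+1) S i k * gmom sgn nu D ns1 ns2 w1 w2 k j = Sb i j) ->
  let g := gmom sgn nu D ns1 ns2 w1 w2 in
  let Q := Qform S ns1 w1 in
  let Qb := Qbform Sb ns2 w2 in
  (forall l x, (0 < l)%N ->
     [/\ Q l x = xi ns1 w1 l x
                 - ((\row_(j < l) g l j) *m invmx (trunc l g) *m xivec ns1 w1 l x) 0 0,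
         Q l x = Sb l l * ((delta_mx 0 ord_max : 'rV[R]_(l.+1))
                            *m invmx (trunc l.+1 g) *m xivec ns1 w1 l.+1 x) 0 0
       & Q l x = \det (\matrix_(i < l.+1, j < l.+1)
                         if (j < l)%N then g i j else xi ns1 w1 i x)
                 / \det (trunc l g)]) /\
  (forall l x,
     [/\ Qb l x = (Sb l l)^-1 * (xi ns2 w2 l x
                 - ((xivec ns2 w2 l x)^T *m invmx (trunc l g) *m (\col_(i < l) g i l)) 0 0),
         Qb l x = ((xivec ns2 w2 l.+1 x)^T *m invmx (trunc l.+1 g)
                    *m (delta_mx ord_max 0 : 'cV[R]_(l.+1))) 0 0
       & Qb l x = \det (\matrix_(i < l.+1, j < l.+1)
                          if (i < l)%N then g i j else xi ns2 w2 j x)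
                  / \det (trunc l.+1 g)]).
Proof.
move=> _ _ _ _ _ _ _ _ _ _ _ S_diag S_lower Sb_diag_neq0 Sb_upper LU g Q Qb.
split=> l x; [move=> _; rewrite /Q /Qform | rewrite /Qb /Qbform]; split.
- exact: (sum_S_row_schur S_diag S_lower Sb_diag_neq0 Sb_upper LU l (xi ns1 w1 ^~ x)).
- exact: (sum_S_row_inv_g S_diag S_lower Sb_diag_neq0 Sb_upper LU l (xi ns1 w1 ^~ x)).
- exact: (sum_S_row_det S_diag S_lower Sb_diag_neq0 Sb_upper LU l (xi ns1 w1 ^~ x)).
- exact: (sum_invSb_col_schur S_diag S_lower Sb_diag_neq0 Sb_upper LU l (xi ns2 w2 ^~ x)).
- exact: (sum_invSb_col_inv_g S_diag S_lower Sb_diag_neq0 Sb_upper LU l (xi ns2 w2 ^~ x)).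
- exact: (sum_invSb_col_det S_diag S_lower Sb_diag_neq0 Sb_upper LU l (xi ns2 w2 ^~ x)).
Qed.
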